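(* Let $V:\mathbb{R}\to\mathbb{R}$ be convex with $m:=e^{-V}$ a probability density. Let $0<c<C$ and $f\in\mathcal{P}_{c,C}$. Then there exists a constant $A=A(c,C,V)$ depending only on $c$, $C$ and $V$ such that the optimal transport map $T$ from $m$ to $f$ satisfies $|T(x)-x|\le A$ for all $x\in\mathbb{R}$.
   Context: $\mathcal{P}_{c,C}:=\{g\in\mathcal{P}(\mathbb{R}):\ c\,m\le g\le C\,m\}$. The optimal transport map (for quadratic cost) from $m$ to $f$ on $\mathbb{R}$ is the monotone map $T=F_f^{-1}\circ F_m$, where $F_m,F_f$ are the cumulative distribution functions. *)

From HB Require Import structures.
From mathcomp Require Import all_boot all_order all_algebra.
From mathcomp Require Import all_classical all_reals all_analysis.
Set Implicit Arguments. Unset Strict Implicit. Unset Printing Implicit Defensive.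
Import Order.TTheory GRing.Theory Num.Theory.
Local Open Scope classical_set_scope.
Local Open Scope ring_scope.

Definition convex_fun (R : realType) (V : R -> R) : Prop :=
  forall (x y t : R), 0 <= t -> t <= 1 ->
    V (t * x + (1 - t) * y) <= t * V x + (1 - t) * V y.

Definition prob_density (R : realType) (g : R -> R) : Prop :=
  measurable_fun setT g /\ (forall x, 0 <= g x) /\
  (\int[@lebesgue_measure R]_x (g x)%:E = 1)%E.

Definition dens_of_pot (R : realType) (V : R -> R) : R -> R :=
  fun x => expR (- V x).

Definition P_cC (R : realType) (c C : R) (m : R -> R) (g : R -> R) : Prop :=
  prob_density g /\ (forall x, c * m x <= g x /\ g x <= C * m x).

Definition cdf (R : realType) (g : R -> R) (x : R) : R :=
  fine (\int[@lebesgue_measure R]_(t in `]-oo, x]) (g t)%:E).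

Definition quantile (R : realType) (F : R -> R) (p : R) : R :=
  inf [set y | p <= F y].

(* Monotone optimal transport map T = F_f^{-1} o F_m from m to f. *)
Definition ot_map (R : realType) (m f : R -> R) (x : R) : R :=
  quantile (cdf f) (cdf m x).

From Pilot Require Import Defs.
From HB Require Import structures.
From mathcomp Require Import all_boot all_order all_algebra.
From mathcomp Require Import all_classical all_reals all_analysis.
From mathcomp Require Import measurable_realfun.
From mathcomp Require Import ring lra.
Set Implicit Arguments. Unset Strict Implicit.
Import Order.TTheory GRing.Theory Num.Theory.
Local Open Scope classical_set_scope.
Local Open Scope ring_scope.

(* As e^{-V} is integrable, the convex V must drop by some a > 0 over a unit
   step [x1, x1 + 1] and rise by some b > 0 over some [z, z + 1]; convexity
   then gives V (u - A) - V u >= A a for u <= x1, and V (u + A) - V u >= A b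
   for u >= z, A >= 1.  Translating the variable of integration, the cdf F of
   m decays geometrically in both tails: F (x - A) <= e^{-aA} F x for x <= x1
   and 1 - F (x + A) <= e^{-bA} (1 - F x) for x >= z.  Gluing the two regimes,
   for every q > 0 there is a B such that at each x either F (x - B) <= q F x
   or 1 - F x <= q (1 - F (x - B)).  Since F_f and 1 - F_f lie within the
   factors c and C of F and 1 - F, any q below c and 1/C gives
   F_f (x - B) < F x <= F_f (x + B), which pins T x = F_f^{-1} (F x) to
   [x - B, x + B]. *)

Section ConvexFun.
Variables (R : realType) (V : R -> R).
Hypothesis cV : convex_fun V.

Lemma convex_fun_chord p q r : p < q -> q < r ->
  (r - p) * V q <= (r - q) * V p + (q - p) * V r.
Proof.
move=> pq qr; have rp : 0 < r - p by lra.
pose t := (r - q) / (r - p).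
have t0 : 0 <= t by apply: divr_ge0; lra.
have t1 : t <= 1 by rewrite /t ler_pdivrMr //; lra.
have := @cV p r t t0 t1.
have -> : t * p + (1 - t) * r = q by rewrite /t; field; lra.
move=> /(ler_wpM2l (ltW rp)).
suff -> : (r - p) * (t * V p + (1 - t) * V r) = (r - q) * V p + (q - p) * V r
  by [].
by rewrite /t; field; lra.
Qed.

Lemma convex_slope_le p q r s : p < q -> r < s -> p <= r -> q <= s ->
  (V q - V p) * (s - r) <= (V s - V r) * (q - p).
Proof.
move=> pq rs pr qs.
suff : (V q - V p) / (q - p) <= (V s - V r) / (s - r).
  by rewrite ler_pdivrMr ?subr_gt0 // mulrAC ler_pdivlMr ?subr_gt0.
have slope_ps : (V q - V p) / (q - p) <= (V s - V p) / (s - p).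
  have [qs'|sq] := ltrP q s; last first.
    by have -> : s = q by apply/le_anti; rewrite qs sq.
  have := convex_fun_chord pq qs'.
  rewrite ler_pdivrMr; last lra.
  rewrite mulrAC ler_pdivlMr; last lra.
  nra.
have slope_rs : (V s - V p) / (s - p) <= (V s - V r) / (s - r).
  have [pr'|rp] := ltrP p r; last first.
    by have -> : r = p by apply/le_anti; rewrite pr rp.
  have := convex_fun_chord pr' rs.
  rewrite ler_pdivrMr; last lra.
  rewrite mulrAC ler_pdivlMr; last lra.
  nra.
exact: le_trans slope_ps slope_rs.
Qed.

Lemma convex_fun_le_max x y t : x <= t -> t <= y -> V t <= Num.max (V x) (V y).
Proof.
move=> xt ty.
have [xy|yx] := ltrP x y; last first.
  have -> : t = x by apply/le_anti; rewrite xt (le_trans ty yx).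
  by rewrite le_max lexx.
pose s := (y - t) / (y - x).
have s0 : 0 <= s by apply: divr_ge0; lra.
have s1 : s <= 1 by rewrite /s ler_pdivrMr //; lra.
have := @cV x y s s0 s1.
have -> : s * x + (1 - s) * y = t by rewrite /s; field; lra.
move=> /le_trans; apply.
have Vx : V x <= Num.max (V x) (V y) by rewrite le_max lexx.
have Vy : V y <= Num.max (V x) (V y) by rewrite le_max lexx orbT.
nra.
Qed.

End ConvexFun.

Lemma expRN_le (R : realType) (a q A : R) : 0 < a -> 0 < q ->
  - ln q / a <= A -> expR (- (A * a)) <= q.
Proof.
move=> a0 q0; rewrite ler_pdivrMr // => hA.
by rewrite -ler_ln ?posrE ?expR_gt0 // expRK; lra.
Qed.

Section TwoSidedDecay.
Variable R : realFieldType.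
Implicit Types F G : R -> R.

Definition two_sided_decay F (B q : R) :=
  forall x, F (x - B) <= q * F x \/ 1 - F x <= q * (1 - F (x - B)).

(* The left regime covers x <= x1 + B - Al and the right one x >= z + Ar;
   B is chosen so that these overlap. *)
Lemma two_sided_decay_of_tails F (q Al Ar x1 z : R) :
  {homo F : x y / x <= y} -> 0 <= q -> 0 <= Al -> 0 <= Ar ->
  (forall x, x <= x1 -> F (x - Al) <= q * F x) ->
  (forall x, z <= x -> 1 - F (x + Ar) <= q * (1 - F x)) ->
  two_sided_decay F (Num.max (Num.max Al Ar) (z + Al + Ar - x1)) q.
Proof.
move=> Fmono q0 Al0 Ar0 decayl decayr x.
set B := Num.max _ _.
have BAl : Al <= B by rewrite /B !le_max lexx.
have BAr : Ar <= B by rewrite /B !le_max lexx orbT.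
have Bz : z + Al + Ar - x1 <= B by rewrite /B le_max lexx orbT.
have [xB|xB] := lerP x (x1 + B - Al); [left|right].
- set u := Num.min x x1.
  have ux : u <= x by rewrite /u ge_min lexx.
  have ux1 : u <= x1 by rewrite /u ge_min lexx orbT.
  have xBu : x - B <= u - Al.
    suff : x - B + Al <= u by lra.
    by rewrite /u le_min; apply/andP; split; lra.
  apply: le_trans (Fmono _ _ xBu) _; apply: le_trans (decayl _ ux1) _.
  by apply: ler_wpM2l => //; apply: Fmono.
- set u := Num.max (x - B) z.
  have xBu : x - B <= u by rewrite /u le_max lexx.
  have zu : z <= u by rewrite /u le_max lexx orbT.
  have ux : u + Ar <= x.
    suff : u <= x - Ar by lra.
    by rewrite /u ge_max; apply/andP; split; lra.
  apply: (@le_trans _ _ (1 - F (u + Ar))).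
    by rewrite lerD2l lerN2; apply: Fmono.
  apply: le_trans (decayr _ zu) _.
  by apply: ler_wpM2l => //; rewrite lerD2l lerN2; apply: Fmono.
Qed.

Lemma cdf_window F G (c C q B : R) :
  (forall x, 0 < F x) -> (forall x, F x < 1) ->
  (forall x, c * F x <= G x /\ G x <= C * F x) ->
  (forall x, c * (1 - F x) <= 1 - G x /\ 1 - G x <= C * (1 - F x)) ->
  two_sided_decay F B q -> 0 <= q -> q < c -> q * C < 1 ->
  forall x, G (x - B) < F x /\ F x < G (x + B).
Proof.
move=> F0 F1 GF GFtail decay q0 qc qC x.
have C0 : 0 <= C.
  have [lo up] := GF 0; have := le_trans lo up; rewrite ler_pM2r //; lra.
have F1x : 0 < 1 - F x by rewrite subr_gt0.
split.
- have [_ up] := GF (x - B); have [tlo _] := GFtail (x - B).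
  case: (decay x) => [Fdecay|Fdecay].
    have h1 : C * F (x - B) <= C * (q * F x) by apply: ler_wpM2l.
    have h2 : (q * C) * F x < 1 * F x by rewrite ltr_pM2r.
    lra.
  rewrite ltNge; apply/negP => FG.
  have : c * (1 - F (x - B)) <= q * (1 - F (x - B)) by lra.
  by rewrite ler_pM2r ?subr_gt0 // leNgt qc.
- have [lo _] := GF (x + B); have [_ tup] := GFtail (x + B).
  case: (decay (x + B)); rewrite addrK => Fdecay.
    have : q * F (x + B) < c * F (x + B) by rewrite ltr_pM2r.
    lra.
  have h1 : C * (1 - F (x + B)) <= C * (q * (1 - F x)) by apply: ler_wpM2l.
  have h2 : (q * C) * (1 - F x) < 1 * (1 - F x) by rewrite ltr_pM2r.
  lra.
Qed.

End TwoSidedDecay.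

Lemma quantile_dist_le (R : realType) (G : R -> R) (p x B : R) :
  {homo G : s t / s <= t} -> G (x - B) < p -> p <= G (x + B) ->
  `|quantile G p - x| <= B.
Proof.
move=> Gmono lo hi; set S := [set y | p <= G y].
have SxB : S (x + B) by [].
have lbS : lbound S (x - B).
  move=> y Sy; rewrite leNgt; apply/negP => /ltW/Gmono Gy.
  by have := le_lt_trans (le_trans Sy Gy) lo; rewrite ltxx.
have lo_inf : x - B <= inf S by apply: lb_le_inf => //; exists (x + B).
have inf_hi : inf S <= x + B by apply: ge_inf => //; exists (x - B).
by rewrite /quantile -/S ler_norml; apply/andP; split; lra.
Qed.

Section DensityIntegrals.
Variable R : realType.
Local Notation mu := (@lebesgue_measure R).
Implicit Types g h : R -> R.

Lemma prob_density_emeasurable g D : prob_density g -> measurable D ->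
  measurable_fun D (fun x => (g x)%:E).
Proof.
by move=> [mg _] mD; apply/measurable_EFinP; exact: measurable_funS mg.
Qed.

Lemma prob_density_integral_le1 g D : prob_density g -> measurable D ->
  (0 <= \int[mu]_(x in D) (g x)%:E <= 1)%E.
Proof.
move=> pg mD; have [_ [g0 g1]] := pg.
rewrite integral_ge0 /=; last by move=> x _; rewrite lee_fin.
rewrite -g1; apply: ge0_subset_integral => //.
- exact: prob_density_emeasurable.
- by move=> x _; rewrite lee_fin.
Qed.

Lemma prob_density_integral_fineK g D : prob_density g -> measurable D ->
  ((fine (\int[mu]_(x in D) (g x)%:E))%:E = \int[mu]_(x in D) (g x)%:E)%E.
Proof.
move=> pg mD; have /andP[g0 g1] := prob_density_integral_le1 pg mD.
by apply: fineK; rewrite ge0_fin_numE //; exact: le_lt_trans g1 (ltry _).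
Qed.

Lemma cdfE g x : prob_density g ->
  ((Defs.cdf g x)%:E = \int[mu]_(t in `]-oo, x]) (g t)%:E)%E.
Proof. by move=> pg; rewrite /Defs.cdf prob_density_integral_fineK. Qed.

Lemma cdf_tailE g x : prob_density g ->
  (\int[mu]_(t in `]x, +oo[) (g t)%:E = (1 - Defs.cdf g x)%:E)%E.
Proof.
move=> pg; have [_ [g0 g1]] := pg; move: g1.
rewrite -(itv_setU_setT false x) ge0_integral_setU //; last 3 first.
- by apply: prob_density_emeasurable => //; apply: measurableU.
- by move=> t _; rewrite lee_fin.
- rewrite disj_set2E; apply/eqP; rewrite -subset0 => t [] /=.
  rewrite !in_itv /= andbT => tx xt.
  by have := lt_le_trans xt tx; rewrite ltxx.
rewrite -cdfE // -prob_density_integral_fineK // => /(congr1 fine) /= g1.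
by rewrite -prob_density_integral_fineK //; congr EFin; lra.
Qed.

Lemma le_cdf g : prob_density g -> {homo Defs.cdf g : x y / x <= y}.
Proof.
move=> pg x y xy; rewrite -lee_fin !cdfE //; have [_ [g0 _]] := pg.
apply: ge0_subset_integral => //.
- exact: prob_density_emeasurable.
- by move=> t _; rewrite lee_fin.
- by move=> t /=; rewrite !in_itv /= => tx; exact: le_trans tx xy.
Qed.

Lemma integral_le_scale g h k D : measurable D ->
  measurable_fun setT g -> measurable_fun setT h ->
  (forall x, 0 <= g x) -> (forall x, 0 <= h x) -> 0 <= k ->
  (forall x, D x -> g x <= k * h x) ->
  (\int[mu]_(x in D) (g x)%:E <= k%:E * \int[mu]_(x in D) (h x)%:E)%E.
Proof.
move=> mD mg mh g0 h0 k0 gh.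
have mhD : measurable_fun D (fun x => (h x)%:E).
  by apply/measurable_EFinP; exact: measurable_funS mh.
rewrite -ge0_integralZl //; last by move=> x _; rewrite lee_fin.
apply: ge0_le_integral => //.
- by move=> x _; rewrite lee_fin.
- by apply/measurable_EFinP; exact: measurable_funS mg.
- by apply: emeasurable_funM => //; exact: measurable_cst.
Qed.

Lemma integral_ge_scale g h k D : measurable D ->
  measurable_fun setT g -> measurable_fun setT h ->
  (forall x, 0 <= h x) -> 0 <= k ->
  (forall x, D x -> k * h x <= g x) ->
  (k%:E * \int[mu]_(x in D) (h x)%:E <= \int[mu]_(x in D) (g x)%:E)%E.
Proof.
move=> mD mg mh h0 k0 hg.
have mhD : measurable_fun D (fun x => (h x)%:E).
  by apply/measurable_EFinP; exact: measurable_funS mh.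
rewrite -ge0_integralZl //; last by move=> x _; rewrite lee_fin.
apply: ge0_le_integral => //.
- by move=> x _; rewrite -EFinM lee_fin; apply: mulr_ge0.
- by apply: emeasurable_funM => //; exact: measurable_cst.
- by apply/measurable_EFinP; exact: measurable_funS mg.
Qed.

Lemma integral_ge_cst g k D : measurable D -> measurable_fun setT g -> 0 <= k ->
  (forall x, D x -> k <= g x) -> (k%:E * mu D <= \int[mu]_(x in D) (g x)%:E)%E.
Proof.
move=> mD mg k0 kg; rewrite -(@integral_cst _ _ _ mu D mD k%:E).
apply: ge0_le_integral => //.
by apply/measurable_EFinP; exact: measurable_funS mg.
Qed.

Lemma cdf_sandwich g h k K : prob_density g -> prob_density h ->
  0 <= k -> 0 <= K -> (forall x, k * h x <= g x /\ g x <= K * h x) ->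
  forall x, k * Defs.cdf h x <= Defs.cdf g x /\
            Defs.cdf g x <= K * Defs.cdf h x.
Proof.
move=> pg ph k0 K0 gh x; have [mg [g0 _]] := pg; have [mh [h0 _]] := ph.
split; rewrite -lee_fin EFinM !cdfE //.
- by apply: integral_ge_scale => // t _; case: (gh t).
- by apply: integral_le_scale => // t _; case: (gh t).
Qed.

Lemma cdf_tail_sandwich g h k K : prob_density g -> prob_density h ->
  0 <= k -> 0 <= K -> (forall x, k * h x <= g x /\ g x <= K * h x) ->
  forall x, k * (1 - Defs.cdf h x) <= 1 - Defs.cdf g x /\
            1 - Defs.cdf g x <= K * (1 - Defs.cdf h x).
Proof.
move=> pg ph k0 K0 gh x; have [mg [g0 _]] := pg; have [mh [h0 _]] := ph.
split; rewrite -lee_fin EFinM -!cdf_tailE //.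
- by apply: integral_ge_scale => // t _; case: (gh t).
- by apply: integral_le_scale => // t _; case: (gh t).
Qed.

End DensityIntegrals.

Section LebesgueShift.
Variable R : realType.
Local Notation mu := (@lebesgue_measure R).

Lemma lebesgue_measure_shift (h : R) (A : set R) : measurable A ->
  pushforward mu ((fun x => x + h) : _ -> measurableTypeR R) A = mu A.
Proof.
move=> mA; apply/esym/lebesgue_measure_unique => //.
  by apply: measurable_funD => //; exact: measurable_cst.
move=> mh _ [[a b]] _ <-.
rewrite [RHS](_ : _ = mu `](a - h), (b - h)]%classic); last first.
  rewrite /= /pushforward; congr (mu _).
  by apply/seteqP; split => t /=; rewrite !in_itv /= => /andP[ta tb];
    apply/andP; split; lra.
rewrite !lebesgue_measure_itv/= !lte_fin.
have -> : (a - h < b - h) = (a < b) by apply/idP/idP => ?; lra.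
by case: ifP => // _; rewrite -EFinD; congr EFin; ring.
Qed.

Lemma integral_shift (g : R -> R) (h : R) (D : set R) :
  measurable_fun setT g -> (forall x, 0 <= g x) -> measurable D ->
  (\int[mu]_(y in D) (g y)%:E =
   \int[mu]_(x in (+%R^~ h) @^-1` D) (g (x + h))%:E)%E.
Proof.
move=> mg g0 mD.
have mh : measurable_fun setT (+%R^~ h : R -> measurableTypeR R).
  by apply: measurable_funD => //; exact: measurable_cst.
transitivity
  (\int[pushforward mu (+%R^~ h : R -> measurableTypeR R)]_(y in D) (g y)%:E)%E.
  by apply: eq_measure_integral => A mA _; exact/esym/lebesgue_measure_shift.
rewrite ge0_integral_pushforward //.
- by apply/measurable_EFinP; exact: measurable_funS mg.
- by move=> y _; rewrite lee_fin.
Qed.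

Lemma integral_shift_itvNy (g : R -> R) (A x : R) :
  measurable_fun setT g -> (forall x, 0 <= g x) ->
  (\int[mu]_(y in `]-oo, (x - A)%R]) (g y)%:E =
   \int[mu]_(u in `]-oo, x]) (g (u - A))%:E)%E.
Proof.
move=> mg g0; rewrite (@integral_shift g (- A)) //; congr (integral _ _ _).
by apply/seteqP; split => t /=; rewrite !in_itv /= => ?; lra.
Qed.

Lemma integral_shift_itvy (g : R -> R) (A x : R) :
  measurable_fun setT g -> (forall x, 0 <= g x) ->
  (\int[mu]_(y in `](x + A)%R, +oo[) (g y)%:E =
   \int[mu]_(u in `]x, +oo[) (g (u + A))%:E)%E.
Proof.
move=> mg g0; rewrite (@integral_shift g A) //; congr (integral _ _ _).
by apply/seteqP; split => t /=; rewrite !in_itv /= !andbT => ?; lra.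
Qed.

End LebesgueShift.

Section ConvexPotential.
Variables (R : realType) (V : R -> R).
Hypothesis cV : convex_fun V.
Hypothesis pm : prob_density (dens_of_pot V).
Local Notation mu := (@lebesgue_measure R).
Local Notation m := (dens_of_pot V).
Local Notation F := (Defs.cdf (dens_of_pot V)).

Let m_meas : measurable_fun setT m. Proof. by case: pm. Qed.

Let m_ge0 x : 0 <= m x. Proof. exact: expR_ge0. Qed.

Lemma integral_pot_gt0 (a b : R) (D : set R) : a < b -> measurable D ->
  `]a, b] `<=` D -> (0 < \int[mu]_(t in D) (m t)%:E)%E.
Proof.
move=> ab mD abD; pose k := expR (- Num.max (V a) (V b)).
apply: (@lt_le_trans _ _ (k%:E * mu `]a, b])%E).
  rewrite lebesgue_measure_itv /= lte_fin ab /= -EFinD -EFinM lte_fin.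
  by rewrite mulr_gt0 ?expR_gt0 // subr_gt0.
apply: (@le_trans _ _ (\int[mu]_(t in `]a, b]) (m t)%:E)%E).
  apply: integral_ge_cst => //; first exact: expR_ge0.
  move=> t /=; rewrite in_itv /= => /andP[ta tb].
  by rewrite /dens_of_pot ler_expR lerN2 (convex_fun_le_max cV (ltW ta) tb).
apply: ge0_subset_integral => //.
- exact: prob_density_emeasurable.
- by move=> t _; rewrite lee_fin.
Qed.

Lemma cdf_pot_gt0 x : 0 < F x.
Proof.
rewrite -lte_fin cdfE //; apply: (@integral_pot_gt0 (x - 1) x) => //; first lra.
by move=> t /=; rewrite !in_itv /= => /andP[].
Qed.

Lemma cdf_pot_lt1 x : F x < 1.
Proof.
rewrite -subr_gt0 -lte_fin -cdf_tailE //.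
apply: (@integral_pot_gt0 x (x + 1)) => //; first lra.
by move=> t /=; rewrite !in_itv /= andbT => /andP[].
Qed.

(* Otherwise convexity bounds V by V 0 on ]-oo, 0], and m has infinite mass
   there. *)
Lemma exists_pot_drop : exists x1, V (x1 + 1) < V x1.
Proof.
case: (pselect (exists x1, V (x1 + 1) < V x1)) => // noDrop; exfalso.
have step x : V x <= V (x + 1).
  by rewrite leNgt; apply/negP => drop; apply: noDrop; exists x.
have Vle0 t : t <= 0 -> V t <= V 0.
  rewrite le_eqVlt => /predU1P[-> //|t0].
  have slope : (V t - V (t - 1)) * (0 - t) <= (V 0 - V t) * (t - (t - 1)).
    by apply: (convex_slope_le cV); lra.
  have := step (t - 1); rewrite subrK; nra.
have /andP[_ le1] := prob_density_integral_le1 pm (measurable_itv `]-oo, 0%R]).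
have : ((m 0)%:E * mu `]-oo, 0%R] <= \int[mu]_(x in `]-oo, 0%R]) (m x)%:E)%E.
  apply: integral_ge_cst;
    [exact: measurable_itv | exact: m_meas | exact: m_ge0 |].
  move=> t /=; rewrite in_itv /= => t0.
  by rewrite /dens_of_pot ler_expR lerN2 Vle0.
rewrite lebesgue_measure_itv /= ltNyr /= mulry gtr0_sg ?mul1e ?expR_gt0 //.
by move=> /le_trans/(_ le1); rewrite leye_eq.
Qed.

Lemma exists_pot_rise : exists z, V z < V (z + 1).
Proof.
case: (pselect (exists z, V z < V (z + 1))) => // noRise; exfalso.
have step x : V (x + 1) <= V x.
  by rewrite leNgt; apply/negP => rise; apply: noRise; exists x.
have Vge0 t : 0 <= t -> V t <= V 0.
  rewrite le_eqVlt => /predU1P[<- //|t0].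
  have slope : (V t - V 0) * (t + 1 - t) <= (V (t + 1) - V t) * (t - 0).
    by apply: (convex_slope_le cV); lra.
  have := step t; nra.
have /andP[_ le1] := prob_density_integral_le1 pm (measurable_itv `[0%R, +oo[).
have : ((m 0)%:E * mu `[0%R, +oo[ <= \int[mu]_(x in `[0%R, +oo[) (m x)%:E)%E.
  apply: integral_ge_cst;
    [exact: measurable_itv | exact: m_meas | exact: m_ge0 |].
  move=> t /=; rewrite in_itv /= andbT => t0.
  by rewrite /dens_of_pot ler_expR lerN2 Vge0.
rewrite lebesgue_measure_itv /= ltry /= mulry gtr0_sg ?mul1e ?expR_gt0 //.
by move=> /le_trans/(_ le1); rewrite leye_eq.
Qed.

Lemma cdf_pot_shiftl x1 A x : 0 < A -> x <= x1 ->
  F (x - A) <= expR (- (A * (V x1 - V (x1 + 1)))) * F x.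
Proof.
move=> A0 xx1; rewrite -lee_fin EFinM !cdfE // integral_shift_itvNy //.
apply: integral_le_scale => //.
- by apply: measurableT_comp => //; apply: measurable_funD => //;
    exact: measurable_cst.
- move=> u /=; rewrite in_itv /= => ux.
  have slope : (V u - V (u - A)) * (x1 + 1 - x1) <=
               (V (x1 + 1) - V x1) * (u - (u - A)).
    by apply: (convex_slope_le cV); lra.
  rewrite /dens_of_pot -expRD ler_expR; nra.
Qed.

Lemma cdf_pot_shiftr z A x : 1 <= A -> z <= x ->
  1 - F (x + A) <= expR (- (A * (V (z + 1) - V z))) * (1 - F x).
Proof.
move=> A1 zx; rewrite -lee_fin EFinM -!cdf_tailE // integral_shift_itvy //.
apply: integral_le_scale => //.
- by apply: measurableT_comp => //; apply: measurable_funD => //;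
    exact: measurable_cst.
- move=> u /=; rewrite in_itv /= andbT => xu.
  have slope : (V (z + 1) - V z) * (u + A - u) <=
               (V (u + A) - V u) * (z + 1 - z).
    by apply: (convex_slope_le cV); lra.
  rewrite /dens_of_pot -expRD ler_expR; nra.
Qed.

Lemma cdf_pot_decayl q : 0 < q ->
  exists x1 A, 0 <= A /\ forall x, x <= x1 -> F (x - A) <= q * F x.
Proof.
move=> q0; have [x1 drop] := exists_pot_drop.
have a0 : 0 < V x1 - V (x1 + 1) by rewrite subr_gt0.
set A := Num.max 1 (- ln q / (V x1 - V (x1 + 1))).
have A1 : 1 <= A by rewrite /A le_max lexx.
have A0 : 0 < A by lra.
exists x1, A; split => [|x xx1]; first lra.
apply: le_trans (cdf_pot_shiftl A0 xx1) _.
apply: ler_wpM2r; first exact: ltW (cdf_pot_gt0 x).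
by apply: expRN_le => //; rewrite /A le_max lexx orbT.
Qed.

Lemma cdf_pot_decayr q : 0 < q ->
  exists z A, 0 <= A /\ forall x, z <= x -> 1 - F (x + A) <= q * (1 - F x).
Proof.
move=> q0; have [z rise] := exists_pot_rise.
have b0 : 0 < V (z + 1) - V z by rewrite subr_gt0.
set A := Num.max 1 (- ln q / (V (z + 1) - V z)).
have A1 : 1 <= A by rewrite /A le_max lexx.
exists z, A; split => [|x zx]; first lra.
apply: le_trans (cdf_pot_shiftr A1 zx) _.
apply: ler_wpM2r; first by rewrite subr_ge0 ltW ?cdf_pot_lt1.
by apply: expRN_le => //; rewrite /A le_max lexx orbT.
Qed.

Lemma cdf_pot_two_sided_decay q : 0 < q -> exists B, two_sided_decay F B q.
Proof.
move=> q0.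
have [x1 [Al [Al0 decayl]]] := cdf_pot_decayl q0.
have [z [Ar [Ar0 decayr]]] := cdf_pot_decayr q0.
exists (Num.max (Num.max Al Ar) (z + Al + Ar - x1)).
exact: two_sided_decay_of_tails (le_cdf pm) (ltW q0) Al0 Ar0 decayl decayr.
Qed.

End ConvexPotential.

Theorem lemma2p7 (R : realType) (V : R -> R) (c C : R) :
  convex_fun V -> prob_density (dens_of_pot V) -> 0 < c -> c < C ->
  exists A : R, forall f : R -> R, P_cC c C (dens_of_pot V) f ->
    forall x : R, `|ot_map (dens_of_pot V) f x - x| <= A.
Proof.
move=> cV pm c0 cC; have C0 : 0 < C := lt_trans c0 cC.
set q := Num.min c C^-1 / 2.
have q0 : 0 < q by apply: divr_gt0 => //; rewrite lt_min c0 invr_gt0 C0.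
have qc : q < c.
  have : Num.min c C^-1 <= c by rewrite ge_min lexx.
  rewrite /q; lra.
have qC : q * C < 1.
  have : Num.min c C^-1 * C <= 1.
    rewrite -(mulVf (lt0r_neq0 C0)); apply: ler_wpM2r; first exact: ltW.
    by rewrite ge_min lexx orbT.
  rewrite /q mulrAC; lra.
have [B decay] := cdf_pot_two_sided_decay cV pm q0.
exists B => f [pf fm] x.
have [lo hi] := cdf_window (cdf_pot_gt0 cV pm) (cdf_pot_lt1 cV pm)
  (cdf_sandwich pf pm (ltW c0) (ltW C0) fm)
  (cdf_tail_sandwich pf pm (ltW c0) (ltW C0) fm) decay (ltW q0) qc qC x.
exact: quantile_dist_le (le_cdf pf) lo (ltW hi).
Qed.
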